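(* Under the Gaussian tile model described in the context, with the location $X$ uniformly distributed a priori on $[L]$, the maximum likelihood location estimate is given by minimizing the norm induced by a generalized inner product: $$\hat{\ell}_{\mathrm{GIP}_{2D}}=\operatorname*{arg\,min}_{\ell\in[L]}\big\|\vec{\mathbf{y}}-\vec{\mathbf{y}}^\ell\big\|_{\mathbf{G}},$$ where $\|\mathbf v\|_{\mathbf G}=\sqrt{\mathbf v^{\top}\mathbf G\mathbf v}$ and $\mathbf{G}$ is the $N_wN_d\times N_wN_d$ diagonal matrix with $$\mathbf{G}_{k+(j-1)N_w,\,k+(j-1)N_w}=\frac{1}{2\sigma_i^2+N_0/\tilde A_{k,j}},\qquad k\in[N_w],\ j\in[N_d].$$
   Context: Setting: each image is a matrix of $N_w\times N_d$ tiles; for a matrix $\mathbf Y$, its column-wise vectorization $\vec{\mathbf y}\in\mathbb R^{N_wN_d}$ has $\vec y_{k+(j-1)N_w}=y_{k,j}$. The captured image is $Y_{k,j}=a_{k,j}+n^i_{k,j}+n^s_{k,j}$, where $a_{k,j}$ is the road signal, $n^i_{k,j}\sim\mathcal N(0,\sigma_i^2)$ is intrinsic noise and $n^s_{k,j}\sim\mathcal N(0,N_0/\tilde A_{k,j})$ is sensor noise, with $\sigma_i^2>0$, $N_0>0$, and $\tilde A_{k,j}>0$ the area of the projection of road tile $(k,j)$ onto the camera's focal plane. The $\ell$-th global map section ($\ell\in[L]$) is $Y^\ell_{k,j}=a^\ell_{k,j}+n^{i,\ell}_{k,j}$ with $n^{i,\ell}_{k,j}\sim\mathcal N(0,\sigma_i^2)$;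 if the true location is $\ell$ then $a_{k,j}=a^\ell_{k,j}$ for all tiles. All noises are independent across tiles and of one another. Conditional on $X=\ell$, the captured image depends on the map only through $\mathbf Y^\ell$, and given $Y^\ell_{k,j}=y^\ell_{k,j}$ the signal is modeled as $a^\ell_{k,j}\sim\mathcal N(y^\ell_{k,j},\sigma_i^2)$, independently across tiles. The maximum likelihood location estimate is the $\ell$ maximizing $\Pr(X=\ell\mid\mathbf Y=\mathbf y,\mathbf Y^l=\mathbf y^l, l\in[L])$. *)

From mathcomp Require Import all_boot all_order all_algebra.
From mathcomp Require Import all_classical all_reals all_analysis.
Set Implicit Arguments. Unset Strict Implicit. Unset Printing Implicit Defensive.
Import Order.TTheory GRing.Theory Num.Theory.
Local Open Scope ring_scope.

Section Defs.
Variable R : realType.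

(* Column-wise vectorization: for Y : 'M_(Nw,Nd), entry (k,j) (0-based) goes
   to index k + j*Nw, i.e. the 1-based index k + (j-1) Nw of the paper. *)
Definition vecc (Nw Nd : nat) (Y : 'M[R]_(Nw, Nd)) : 'cV[R]_(Nd * Nw) :=
  (mxvec Y^T)^T.

Definition Gweights (Nw Nd : nat) (sigma_i N0 : R) (At : 'M[R]_(Nw, Nd))
  : 'M[R]_(Nw, Nd) :=
  \matrix_(k, j) (sigma_i ^+ 2 *+ 2 + N0 / At k j)^-1.

Definition Gmat (Nw Nd : nat) (sigma_i N0 : R) (At : 'M[R]_(Nw, Nd))
  : 'M[R]_(Nd * Nw) :=
  diag_mx (vecc (Gweights sigma_i N0 At))^T.

Definition Gnorm (n : nat) (G : 'M[R]_n) (v : 'cV[R]_n) : R :=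
  Num.sqrt ((v^T *m G *m v) 0 0).

(* Conditional density of the captured tile value Y_{k,j} given the map tile
   Y^l_{k,j} = y^l_{k,j} and X = l: Y = a + n^i + n^s with
   a ~ N(y^l, sigma_i^2), n^i ~ N(0, sigma_i^2), n^s ~ N(0, N0/Atilde)
   independent, i.e. Y ~ N(y^l, 2 sigma_i^2 + N0/Atilde).
   (normal_pdf m s x takes the standard deviation s.) *)
Definition tile_lik (sigma_i N0 At yl y : R) : R :=
  normal_pdf yl (Num.sqrt (sigma_i ^+ 2 *+ 2 + N0 / At)) y.

(* Likelihood of location l: conditional density of the captured image given
   the map, X = l (depends on the map only through Y^l; tiles independent). *)
Definition likelihood (Nw Nd L : nat) (sigma_i N0 : R) (At : 'M[R]_(Nw, Nd))
  (y : 'M[R]_(Nw, Nd)) (ys : 'I_L -> 'M[R]_(Nw, Nd)) (l : 'I_L) : R :=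
  \prod_(k < Nw) \prod_(j < Nd) tile_lik sigma_i N0 (At k j) (ys l k j) (y k j).

Definition uniform_prior (L : nat) (l : 'I_L) : R := (L%:R)^-1.

Definition posterior (Nw Nd L : nat) (sigma_i N0 : R) (At : 'M[R]_(Nw, Nd))
  (y : 'M[R]_(Nw, Nd)) (ys : 'I_L -> 'M[R]_(Nw, Nd)) (l : 'I_L) : R :=
  uniform_prior l * likelihood sigma_i N0 At y ys l /
  \sum_(m < L) uniform_prior m * likelihood sigma_i N0 At y ys m.

Definition is_ML_estimate (Nw Nd L : nat) (sigma_i N0 : R)
  (At : 'M[R]_(Nw, Nd)) (y : 'M[R]_(Nw, Nd)) (ys : 'I_L -> 'M[R]_(Nw, Nd))
  (l : 'I_L) : Prop :=
  forall m : 'I_L, posterior sigma_i N0 At y ys m <= posterior sigma_i N0 At y ys l.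

End Defs.

From mathcomp Require Import all_boot all_order all_algebra.
From mathcomp Require Import all_classical all_reals all_analysis.
From mathcomp Require Import ring.
Import Order.TTheory GRing.Theory Num.Theory.
Local Open Scope ring_scope.

(* Each captured tile is Gaussian around the map tile with variance
   v_{k,j} = 2 sigma_i^2 + N0/Atilde_{k,j}, independently across tiles, so the
   likelihood of location l is a positive constant (independent of l) times
   exp(-||vec y - vec y^l||_G^2 / 2) with G = diag(1/v_{k,j}).  Under a uniform
   prior the posterior is a positive multiple of the likelihood, and exp is
   increasing, so maximizing the posterior is minimizing the G-norm. *)

Section QuadraticForm.
Variables (R : realType) (Nw Nd : nat).

Lemma veccB (Y Z : 'M[R]_(Nw, Nd)) : vecc (Y - Z) = vecc Y - vecc Z.
Proof. by rewrite /vecc !linearB. Qed.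

Lemma quad_diag_vecc (W D : 'M[R]_(Nw, Nd)) :
  ((vecc D)^T *m diag_mx (vecc W)^T *m vecc D) 0 0
  = \sum_(k < Nw) \sum_(j < Nd) W k j * D k j ^+ 2.
Proof.
rewrite mul_mx_diag mxE (reindex (uncurry (@mxvec_index Nd Nw))) /=; last first.
  have [g g1 g2] := @curry_mxvec_bij Nd Nw.
  by exists g => x _; [apply: g1 | apply: g2]; rewrite inE.
rewrite exchange_big pair_bigA /=; apply: eq_bigr => -[j k] _ /=.
by rewrite !mxE !mxvecE !mxE expr2 mulrCA mulrA.
Qed.

End QuadraticForm.

Section GaussianTiles.
Variables (R : realType) (sigma_i N0 : R).
Hypotheses (sigma_i_gt0 : 0 < sigma_i) (N0_gt0 : 0 < N0).

Definition tile_var (A : R) : R := sigma_i ^+ 2 *+ 2 + N0 / A.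

Lemma tile_var_gt0 (A : R) : 0 < A -> 0 < tile_var A.
Proof.
move=> A_gt0; apply: ltr_wpDr; first exact: divr_ge0 (ltW N0_gt0) (ltW A_gt0).
by rewrite pmulrn_lgt0 // exprn_gt0.
Qed.

Lemma tile_likE (A yl yv : R) : 0 < A ->
  tile_lik sigma_i N0 A yl yv =
  normal_peak (Num.sqrt (tile_var A)) *
  expR (- ((tile_var A)^-1 * (yv - yl) ^+ 2 / 2)).
Proof.
move=> /tile_var_gt0 v_gt0.
rewrite /tile_lik normal_pdfE; last by rewrite gt_eqF // sqrtr_gt0.
rewrite /normal_fun sqr_sqrtr ?(ltW v_gt0) //; congr (_ * expR _).
by rewrite -mulNr -/(tile_var A); field; rewrite gt_eqF.
Qed.

Variables (Nw Nd L : nat) (At : 'M[R]_(Nw, Nd)).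
Hypothesis At_gt0 : forall k j, 0 < At k j.

Definition Gdist2 (y yl : 'M[R]_(Nw, Nd)) : R :=
  \sum_(k < Nw) \sum_(j < Nd) Gweights sigma_i N0 At k j * (y k j - yl k j) ^+ 2.

Lemma Gdist2_ge0 (y yl : 'M[R]_(Nw, Nd)) : 0 <= Gdist2 y yl.
Proof.
apply: sumr_ge0 => k _; apply: sumr_ge0 => j _.
by rewrite mxE mulr_ge0 ?sqr_ge0 // invr_ge0 ltW // tile_var_gt0.
Qed.

Lemma Gnorm_veccB (y yl : 'M[R]_(Nw, Nd)) :
  Gnorm (Gmat sigma_i N0 At) (vecc y - vecc yl) = Num.sqrt (Gdist2 y yl).
Proof.
rewrite /Gnorm /Gmat -veccB quad_diag_vecc.
by congr (Num.sqrt _); apply: eq_bigr => k _; apply: eq_bigr => j _; rewrite !mxE.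
Qed.

Definition likelihood_scale : R :=
  \prod_(k < Nw) \prod_(j < Nd) normal_peak (Num.sqrt (tile_var (At k j))).

Lemma likelihood_scale_gt0 : 0 < likelihood_scale.
Proof.
apply: prodr_gt0 => k _; apply: prodr_gt0 => j _.
by apply: normal_peak_gt0; rewrite gt_eqF // sqrtr_gt0 tile_var_gt0.
Qed.

Variables (y : 'M[R]_(Nw, Nd)) (ys : 'I_L -> 'M[R]_(Nw, Nd)).

Lemma likelihoodE (l : 'I_L) :
  likelihood sigma_i N0 At y ys l =
  likelihood_scale * expR (- (Gdist2 y (ys l) / 2)).
Proof.
rewrite /likelihood /Gdist2 mulr_suml -sumrN expR_sum -big_split /=.
apply: eq_bigr => k _.
rewrite mulr_suml -sumrN expR_sum -big_split /=; apply: eq_bigr => j _.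
by rewrite tile_likE // mxE.
Qed.

Lemma likelihood_gt0 (l : 'I_L) : 0 < likelihood sigma_i N0 At y ys l.
Proof. by rewrite likelihoodE mulr_gt0 ?likelihood_scale_gt0 ?expR_gt0. Qed.

Lemma ler_likelihood (l m : 'I_L) :
  (likelihood sigma_i N0 At y ys m <= likelihood sigma_i N0 At y ys l) =
  (Gdist2 y (ys l) <= Gdist2 y (ys m)).
Proof.
by rewrite !likelihoodE ler_pM2l ?likelihood_scale_gt0 // ler_expR lerN2 ler_pM2r.
Qed.

Lemma ler_posterior (l m : 'I_L) :
  (posterior sigma_i N0 At y ys m <= posterior sigma_i N0 At y ys l) =
  (likelihood sigma_i N0 At y ys m <= likelihood sigma_i N0 At y ys l).
Proof.
have L_gt0 : (0 < L)%N by apply: leq_ltn_trans (ltn_ord l).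
have prior_gt0 (i : 'I_L) : 0 < uniform_prior R i by rewrite invr_gt0 ltr0n.
have evidence_gt0 :
    0 < \sum_(i < L) uniform_prior R i * likelihood sigma_i N0 At y ys i.
  rewrite (bigD1 l) //= ltr_pwDl ?mulr_gt0 ?likelihood_gt0 //.
  by apply: sumr_ge0 => i _; rewrite mulr_ge0 ?ltW ?likelihood_gt0.
by rewrite /posterior ler_pM2r ?invr_gt0 // ler_pM2l.
Qed.

End GaussianTiles.

Theorem corollary1 (R : realType) (Nw Nd L : nat) (sigma_i N0 : R)
  (At : 'M[R]_(Nw, Nd)) (y : 'M[R]_(Nw, Nd)) (ys : 'I_L -> 'M[R]_(Nw, Nd)) :
  0 < sigma_i -> 0 < N0 -> (forall k j, 0 < At k j) ->
  forall l : 'I_L,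
    is_ML_estimate sigma_i N0 At y ys l <->
    (forall m : 'I_L,
       Gnorm (Gmat sigma_i N0 At) (vecc y - vecc (ys l))
       <= Gnorm (Gmat sigma_i N0 At) (vecc y - vecc (ys m))).
Proof.
move=> sigma_i_gt0 N0_gt0 At_gt0 l.
have ML_iff_Gnorm m :
    (posterior sigma_i N0 At y ys m <= posterior sigma_i N0 At y ys l) =
    (Gnorm (Gmat sigma_i N0 At) (vecc y - vecc (ys l))
     <= Gnorm (Gmat sigma_i N0 At) (vecc y - vecc (ys m))).
  by rewrite ler_posterior // ler_likelihood // !Gnorm_veccB // ler_sqrt
    ?Gdist2_ge0.
by split=> le_l m; [rewrite -ML_iff_Gnorm | rewrite ML_iff_Gnorm]; apply: le_l.
Qed.
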